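(* Let $G$ be a graph, $S\subseteq V(G)$, $k$ an integer, and let $\mathcal{C}$ be the set of all inclusion-wise maximal chips. For $C_1,C_2\in\mathcal{C}$ with $C_1\neq C_2$, $C_1$ touches $C_2$ if and only if $N(C_1) \cap C_2 \neq \emptyset$.
   Context: $N(C)$ is the set of vertices outside $C$ with a neighbour in $C$. For $X,Y\subseteq V(G)$, a set $W$ is an $X-Y$ separator if no connected component of $G\setminus W$ contains both a vertex of $X$ and a vertex of $Y$. $R_H(Z)$ denotes the set of vertices reachable from $Z$ in $H$. An inclusion-wise minimal $X-Y$ separator $W$ is an important $X-Y$ separator if there is no $X-Y$ separator $W'$ with $|W'|\le|W|$ and $R_{G\setminus W}(X\setminus W)\subsetneq R_{G\setminus W'}(X\setminus W')$. For fixed $S$ and $k$, a set $C\subseteq V(G)$ is a chip if $G[C]$ is connected, $|N(C)|\le 3k$, and $N(C)$ is an important $C-S$ separator. Two distinct chips $C_1,C_2\in\mathcal{C}$ touch if $C_1\cap C_2\neq\emptyset$ or there is an edge with one endpoint in $C_1$ and the other in $C_2$. *)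

(* A graph is a finite simple undirected graph:
   vertex set a finType T, adjacency a symmetric irreflexive relation e. *)
From mathcomp Require Import all_boot all_order all_algebra.
Set Implicit Arguments. Unset Strict Implicit. Unset Printing Implicit Defensive.
Import GRing.Theory Num.Theory.

Section Graph.
Variables (T : finType) (e : rel T).

Definition nbh (C : {set T}) : {set T} :=
  [set v | (v \notin C) && [exists u in C, e u v]].

Definition del_rel (W : {set T}) : rel T :=
  fun u v => [&& e u v, u \notin W & v \notin W].

Definition ind_rel (C : {set T}) : rel T :=
  fun u v => [&& e u v, u \in C & v \in C].

Definition induced_connected (C : {set T}) : Prop :=
  C != set0 /\ forall u v, u \in C -> v \in C -> connect (ind_rel C) u v.

Definition separator (X Y W : {set T}) : Prop :=
  forall x y, x \in X -> y \in Y -> x \notin W -> y \notin W ->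
    ~~ connect (del_rel W) x y.

Definition reach (W Z : {set T}) : {set T} :=
  [set v | (v \notin W) && [exists z in Z :\: W, connect (del_rel W) z v]].

Definition minimal_separator (X Y W : {set T}) : Prop :=
  separator X Y W /\ forall W' : {set T}, W' \proper W -> ~ separator X Y W'.

Definition important_separator (X Y W : {set T}) : Prop :=
  minimal_separator X Y W /\
  ~ (exists W' : {set T}, separator X Y W' /\ #|W'| <= #|W| /\
       reach W (X :\: W) \proper reach W' (X :\: W')).

Definition chip (S : {set T}) (k : int) (C : {set T}) : Prop :=
  induced_connected C /\ (#|nbh C|%:Z <= 3 * k)%R /\
  important_separator C S (nbh C).

Definition maximal_chip (S : {set T}) (k : int) (C : {set T}) : Prop :=
  chip S k C /\ forall C' : {set T}, chip S k C' -> C \subset C' -> C' = C.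

Definition touch (C1 C2 : {set T}) : Prop :=
  C1 :&: C2 != set0 \/ exists u v, [/\ u \in C1, v \in C2 & e u v].

End Graph.

From mathcomp Require Import all_boot all_order all_algebra.

(* An edge from u in C1 to v in C2 gives v in N(C1) unless v already lies in
   C1. If C1 and C2 meet but N(C1) misses C2, then a path in G[C2] can never
   leave C1, so by connectivity C2 is contained in C1, contradicting
   maximality of C2. *)

Set Implicit Arguments.
Unset Strict Implicit.
Unset Printing Implicit Defensive.

Lemma connect_exit (T : finType) (r : rel T) (A : {set T}) x y :
  connect r x y -> x \in A -> y \notin A ->
  exists a b, [/\ a \in A, b \notin A & r a b].
Proof.
move/connectP=> [p]; elim: p x => [|z p IH] x /=; first by move=> _ -> ->.
move=> /andP[rxz zp] yl xA yNA; case zA: (z \in A); first exact: IH zp yl zA yNA.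
by exists x, z; rewrite zA.
Qed.

Section Touch.
Variables (T : finType) (e : rel T).

Lemma mem_nbh (C : {set T}) u v : u \in C -> v \notin C -> e u v -> v \in nbh e C.
Proof. by move=> uC vNC euv; rewrite inE vNC; apply/existsP; exists u; rewrite uC. Qed.

Lemma induced_connected_sub_nbh0 (C1 C2 : {set T}) :
  induced_connected e C2 -> C1 :&: C2 != set0 -> nbh e C1 :&: C2 = set0 ->
  C2 \subset C1.
Proof.
move=> [_ conn2] /set0Pn[x /setIP[xC1 xC2]] nbh0.
apply/subsetP => y yC2; apply/negPn/negP => yNC1.
have [a [b [aC1 bNC1 /and3P[eab _ bC2]]]] :=
  connect_exit (conn2 x y xC2 yC2) xC1 yNC1.
have : b \in nbh e C1 :&: C2 by rewrite inE bC2 (mem_nbh aC1 bNC1 eab).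
by rewrite nbh0 inE.
Qed.

Lemma touch_nbh (C1 C2 : {set T}) :
  induced_connected e C2 -> ~~ (C2 \subset C1) ->
  touch e C1 C2 <-> nbh e C1 :&: C2 != set0.
Proof.
move=> conn2 notsub.
have meet_nbh : C1 :&: C2 != set0 -> nbh e C1 :&: C2 != set0.
  move=> meet; apply/eqP => nbh0.
  by move: notsub; rewrite (induced_connected_sub_nbh0 conn2 meet nbh0).
split.
- case=> [|[u [v [uC1 vC2 euv]]]]; first exact: meet_nbh.
  case vC1: (v \in C1).
    by apply: meet_nbh; apply/set0Pn; exists v; rewrite inE vC1.
  by apply/set0Pn; exists v; rewrite inE vC2 (mem_nbh uC1 _ euv) ?vC1.
- case/set0Pn=> v /setIP[]; rewrite inE => /andP[_ /existsP[u /andP[uC1 euv]]] vC2.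
  by right; exists u, v.
Qed.

End Touch.

Theorem lemma3p6 (T : finType) (e : rel T) (e_sym : symmetric e)
  (e_irr : irreflexive e) (S : {set T}) (k : int) (C1 C2 : {set T}) :
  maximal_chip e S k C1 -> maximal_chip e S k C2 -> C1 != C2 ->
  (touch e C1 C2 <-> nbh e C1 :&: C2 != set0).
Proof.
move=> [chip1 _] [[conn2 _] max2] neq.
apply: touch_nbh conn2 _; apply/negP => sub21.
by move: neq; rewrite (max2 C1 chip1 sub21) eqxx.
Qed.
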